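(* Let $N\ge1$ be the number of rounds of \texttt{DEVI}$(\gamma,\mathcal P,N)$. Then $Q^{(N-1)}(s,a)-Q^{(N)}(s,a)\le\gamma^{N-1}$ for all $(s,a)\in\mathcal S\times\mathcal A$.
   Context: Finite $\mathcal S,\mathcal A$, reward $r:\mathcal S\times\mathcal A\to[0,1]$, sets $\mathcal S_{s,a}\subseteq\mathcal S$, $\gamma\in[0,1)$. $\mathcal P$ is a nonempty compact set (the confidence polytope given as input) of vectors $p\in[0,1]^{\mathcal S\times\mathcal A\times\mathcal S}$ with $\sum_{s'\in\mathcal S_{s,a}}p_{s,a,s'}=1$ for all $(s,a)$. \texttt{DEVI}$(\gamma,\mathcal P,N)$: $Q^{(0)}(s,a)=1/(1-\gamma)$; for $n=1,\dots,N$: $V^{(n-1)}(s)=\max_aQ^{(n-1)}(s,a)$ and $Q^{(n)}(s,a)=r(s,a)+\gamma\max_{p\in\mathcal P}\sum_{s'\in\mathcal S_{s,a}}p_{s,a,s'}V^{(n-1)}(s')$. *)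

From HB Require Import structures.
From mathcomp Require Import all_boot all_order all_algebra.
From mathcomp Require Import all_classical all_reals all_analysis.
Set Implicit Arguments. Unset Strict Implicit. Unset Printing Implicit Defensive.
Import Order.TTheory GRing.Theory Num.Theory.
Import numFieldNormedType.Exports.
Local Open Scope classical_set_scope.
Local Open Scope ring_scope.

(* The inner maximum over the compact set P is
   written as the supremum of the (attained) set of values; the maximum over
   the finite action set is the supremum of the finite range. *)
Section DEVI.
Context {R : realType} {S A : finType}.
Variables (gamma : R) (r : S -> A -> R) (Ssa : S -> A -> {set S})
          (P : set (S * A * S -> R)).

Definition DEVI_V (Q : S -> A -> R) (s : S) : R := sup (range (Q s)).

Fixpoint DEVI_Q (n : nat) : S -> A -> R :=
  match n with
  | 0 => fun _ _ => (1 - gamma)^-1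
  | n'.+1 => fun s a =>
      r s a + gamma * sup [set \sum_(s' in Ssa s a) p (s, a, s') * DEVI_V (DEVI_Q n') s'
                          | p in P]
  end.
End DEVI.

From HB Require Import structures.
From mathcomp Require Import all_boot all_order all_algebra.
From mathcomp Require Import all_classical all_reals all_analysis.
Import Order.TTheory GRing.Theory Num.Theory.
Import numFieldNormedType.Exports.
From mathcomp Require Import ring.

Set Implicit Arguments.
Unset Strict Implicit.
Unset Printing Implicit Defensive.
Local Open Scope classical_set_scope.
Local Open Scope ring_scope.

(* Both maxima in a DEVI round (over the actions and over the transition
   kernels in P) are 1-Lipschitz in the sup norm, since a convex combination of
   a pointwise difference is bounded by the bound on that difference.  Hence the
   gap Q^(n) - Q^(n+1) is contracted by gamma in each round, and the first gap
   Q^(0) - Q^(1) = 1 - r is at most 1. *)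

Lemma has_ubound_range_fin (R : realType) (A : finType) (f : A -> R) :
  has_ubound (range f).
Proof.
exists (\sum_a `|f a|) => _ [a _ <-].
by rewrite (le_trans (ler_norm _)) // (bigD1 a) //= lerDl sumr_ge0.
Qed.

Lemma sup_range_cst (R : realType) (A : finType) (a : A) (c : R) :
  sup (range (fun _ : A => c)) = c.
Proof. by rewrite set_cst ifN ?sup1 //; apply/set0P; exists a. Qed.

Lemma sup_rangeB_le (R : realType) (A : finType) (f g : A -> R) (c : R) :
  0 <= c -> (forall a, f a - g a <= c) -> sup (range f) - sup (range g) <= c.
Proof.
move=> c_ge0 fg_le.
have [[a0 _]|A0] := pselect (exists a : A, True); last first.
  have range0 (h : A -> R) : range h = set0.
    by apply/seteqP; split => // x [a _ _]; apply: A0; exists a.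
  by rewrite !range0 sup0 subrr.
rewrite lerBlDr; apply: ge_sup; first by exists (f a0), a0.
move=> _ [a _ <-]; rewrite -lerBlDr (le_trans _ (fg_le a)) // lerB //.
by apply: ub_le_sup; [exact: has_ubound_range_fin | exists a].
Qed.

Section SupConvexCombination.
Variables (R : realType) (S : finType) (X : Type) (P : set X)
  (w : X -> S -> R) (D : {set S}).
Hypothesis w_ge0 : forall p, P p -> forall s, 0 <= w p s.
Hypothesis w_sum1 : forall p, P p -> \sum_(s in D) w p s = 1.

Lemma wsum_le (V : S -> R) (c : R) p : P p ->
  (forall s, V s <= c) -> \sum_(s in D) w p s * V s <= c.
Proof.
move=> Pp V_le; rewrite -[leRHS]mul1r -(w_sum1 Pp) mulr_suml.
by apply: ler_sum => s _; rewrite ler_wpM2l ?w_ge0.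
Qed.

Lemma has_ubound_wsum (V : S -> R) :
  has_ubound [set \sum_(s in D) w p s * V s | p in P].
Proof.
exists (\sum_s `|V s|) => _ [p Pp <-]; apply: wsum_le => // s.
by rewrite (le_trans (ler_norm _)) // (bigD1 s) //= lerDl sumr_ge0.
Qed.

Lemma sup_wsum_cst (c : R) : P !=set0 ->
  sup [set \sum_(s in D) w p s * c | p in P] = c.
Proof.
move=> P0; rewrite (@eq_imagel _ _ _ _ (fun=> c)); last first.
  by move=> p Pp; rewrite -mulr_suml w_sum1 // mul1r.
by rewrite set_cst ifN ?sup1 //; exact/set0P.
Qed.

Lemma sup_wsumB_le (V W : S -> R) (c : R) : P !=set0 ->
  (forall s, V s - W s <= c) ->
  sup [set \sum_(s in D) w p s * V s | p in P] -
  sup [set \sum_(s in D) w p s * W s | p in P] <= c.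
Proof.
move=> [p0 Pp0] VW_le; rewrite lerBlDr addrC.
apply: ge_sup; first by exists (\sum_(s in D) w p0 s * V s), p0.
move=> _ [p Pp <-].
have -> : \sum_(s in D) w p s * V s =
    \sum_(s in D) w p s * W s + \sum_(s in D) w p s * (V s - W s).
  by rewrite -big_split /=; apply: eq_bigr => s _; rewrite -mulrDr addrC subrK.
apply: lerD; last exact: wsum_le.
by apply: ub_le_sup; [exact: has_ubound_wsum | exists p].
Qed.

End SupConvexCombination.

Section DEVIGap.
Variables (R : realType) (S A : finType) (r : S -> A -> R)
  (Ssa : S -> A -> {set S}) (gamma : R) (P : set (S * A * S -> R)).
Hypothesis r_ge0 : forall s a, 0 <= r s a.
Hypothesis gamma_ge0 : 0 <= gamma.
Hypothesis gamma_lt1 : gamma < 1.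
Hypothesis P0 : P !=set0.
Hypothesis p_ge0 : forall p, P p -> forall i, 0 <= p i.
Hypothesis p_sum1 : forall p, P p -> forall s a,
  \sum_(s' in Ssa s a) p (s, a, s') = 1.

Local Notation Q := (DEVI_Q gamma r Ssa P).

Lemma DEVI_Q0_Q1_gap s a : Q 0 s a - Q 1 s a <= 1.
Proof.
rewrite /= /DEVI_V (sup_range_cst a).
rewrite (sup_wsum_cst (w := fun p s' => p (s, a, s'))) //; last first.
  by move=> p Pp; exact: p_sum1.
have gamma1 : 1 - gamma != 0 by rewrite subr_eq0 eq_sym lt_eqF.
have -> : (1 - gamma)^-1 - (r s a + gamma * (1 - gamma)^-1) = 1 - r s a.
  by field.
by rewrite lerBlDr lerDl.
Qed.

Lemma DEVI_Q_gap n s a : Q n s a - Q n.+1 s a <= gamma ^+ n.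
Proof.
elim: n s a => [|n IHn] s a; first exact: DEVI_Q0_Q1_gap.
rewrite [Q n.+1 s a]/= [Q n.+2 s a]/=.
rewrite opprD addrACA subrr add0r -mulrBr exprS ler_wpM2l //.
apply: (sup_wsumB_le (w := fun p s' => p (s, a, s'))) => //.
- by move=> p Pp s'; exact: p_ge0.
- by move=> p Pp; exact: p_sum1.
- by move=> s'; apply: sup_rangeB_le; [exact: exprn_ge0 | exact: IHn].
Qed.

End DEVIGap.

Theorem lemma22 (R : realType) (S A : finType)
  (r : S -> A -> R) (Ssa : S -> A -> {set S}) (gamma : R)
  (P : set (S * A * S -> R)) (N : nat) :
  (forall s a, 0 <= r s a <= 1) ->
  0 <= gamma < 1 ->
  P !=set0 ->
  compact (P : set {ptws (S * A * S) -> R}) ->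
  (forall p, P p -> forall i, 0 <= p i <= 1) ->
  (forall p, P p -> forall s a, \sum_(s' in Ssa s a) p (s, a, s') = 1) ->
  (1 <= N)%N ->
  forall s a,
    DEVI_Q gamma r Ssa P N.-1 s a - DEVI_Q gamma r Ssa P N s a <= gamma ^+ N.-1.
Proof.
move=> r01 /andP[gamma_ge0 gamma_lt1] P0 _ p01 p_sum1.
case: N => // n _ s a; apply: DEVI_Q_gap => //.
- by move=> s' a'; case/andP: (r01 s' a').
- by move=> p Pp i; case/andP: (p01 p Pp i).
Qed.
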